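(* Let $g\ge1$, $n=g+1$, $k\in\{1,\dots,g\}$, $I_k=\{1,\dots,k\}$. Define the rational map $\tilde\psi_{[\mathbf k],v_1}:\mathbb C^{2g+1}\dashrightarrow(\mathbb C^* )^{\binom nk}\times\mathbb{WP}^{3g-1}$, $(\lambda_1,\dots,\lambda_g,\kappa_1,\dots,\kappa_n)\mapsto((\alpha_J)_{J\in\binom{[n]}k},(\mathbf U,\mathbf V,\mathbf W))$ by $$\alpha_J=\frac{\tilde A_JK_J}{\tilde A_{I_k}K_{I_k}}=\frac{K_J^2}{K_{I_k}^2}\prod_{l=1}^g\lambda_l^{(B^T\mathbf c_J)_{l+1}},\qquad[\mathbf U\ \mathbf V\ \mathbf W]=BK.$$ Then the Zariski closure of the image of $\tilde\psi_{[\mathbf k],v_1}$ equals $\mathcal H_{\Gamma,[\mathbf k],v_1}$, the Zariski closure of the image of the map $\psi_{[\mathbf k],v_1}(\beta,\kappa)=((\alpha_I)_I,(\mathbf U,\mathbf V,\mathbf W))$ with $\alpha_I=a_{\mathbf c_I}(\kappa)\prod_l\beta_l^{(\mathbf c_I)_l}$ and $[\mathbf U\ \mathbf V\ \mathbf W]=BK$; i.e. the two parametrizations are equivalent.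
   Context: $B\in\mathbb Z^{g\times n}$ has $B_{i,1}=1$, $B_{i,i+1}=-1$, other entries $0$; $K$ is the $n\times 3$ matrix $K_{ij}=\kappa_i^j$; $\mathbb{WP}^{3g-1}$ has coordinates $(\mathbf U,\mathbf V,\mathbf W)$ of weights $1,2,3$. $\tilde A=V\cdot\mathrm{diag}(1,\lambda_1,\dots,\lambda_g)$ with $V_{ij}=\kappa_j^{i-1}$ ($k\times n$), $\tilde A_J$ its maximal minor on columns $J$, and $K_J=\prod_{i<j\in J}(\kappa_j-\kappa_i)$. Let $\mathbf s\in\mathbb R^n$ have first $k$ entries $1$, rest $0$; for a $k$-subset $I$, $\mathbf c_I\in\mathbb Z^g$ is the unique vector with $B^T\mathbf c_I+\mathbf s=\mathbf 1_I$. For $\mathbf c\in\mathbb Z^g$, $a_{\mathbf c}(\kappa)=\prod_{i}(\kappa_{i+1}-\kappa_1)^{-2c_i^2}\prod_{i<j}\big(\frac{(\kappa_{i+1}-\kappa_{j+1})^2}{(\kappa_{i+1}-\kappa_1)^2(\kappa_{j+1}-\kappa_1)^2}\big)^{c_ic_j}$. $\mathcal H_{\Gamma,[\mathbf k],v_1}$ is the Hirota variety component of the genus-$g$ banana graph parametrizing KP multi-solitons from degenerate hyperelliptic curves. *)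

From HB Require Import structures.
From mathcomp Require Import all_boot all_order all_algebra.
From mathcomp Require Import reals complex.
Set Implicit Arguments. Unset Strict Implicit. Unset Printing Implicit Defensive.
Import Order.TTheory GRing.Theory Num.Theory.
Local Open Scope ring_scope.
Local Open Scope complex_scope.

Section Defs.
Variable F : fieldType.

(* A polynomial in variables indexed by a finite type X is a finite list of
   (coefficient, exponent vector) terms. *)
Definition polyf (X : finType) := seq (F * {ffun X -> nat}).

Definition peval (X : finType) (p : polyf X) (v : X -> F) : F :=
  \sum_(m <- p) m.1 * \prod_(x : X) v x ^+ m.2 x.

Definition zclosure (X : finType) (S : (X -> F) -> Prop) : (X -> F) -> Prop :=
  fun v => forall p : polyf X, (forall w, S w -> peval p w = 0) -> peval p v = 0.

Variables (g k : nat).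
(* n = g + 1 ; indices are 0-based: kappa_1..kappa_n  ~  kappa 0 .. kappa g *)

Definition ksub := {J : {set 'I_g.+1} | #|J| == k}.

Definition Ik : {set 'I_g.+1} := [set i : 'I_g.+1 | (i < k)%N].

Definition Bmx : 'M[F]_(g, g.+1) :=
  \matrix_(i < g, j < g.+1)
     ((if j == ord0 then 1 else 0) - (if j == lift ord0 i then 1 else 0)).

Definition Kmx (kappa : 'I_g.+1 -> F) : 'M[F]_(g.+1, 3) :=
  \matrix_(i < g.+1, j < 3) kappa i ^+ j.+1.

Definition Vmx (kappa : 'I_g.+1 -> F) : 'M[F]_(k, g.+1) :=
  \matrix_(i < k, j < g.+1) kappa j ^+ i.
Definition Dmx (lambda : 'I_g -> F) : 'M[F]_(g.+1) :=
  diag_mx (\row_(j < g.+1) if unlift ord0 j is Some l then lambda l else 1).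
Definition Atil (lambda : 'I_g -> F) (kappa : 'I_g.+1 -> F) : 'M[F]_(k, g.+1) :=
  Vmx kappa *m Dmx lambda.

(* maximal minor on the columns J (taken in increasing order) *)
Definition minorA (lambda : 'I_g -> F) (kappa : 'I_g.+1 -> F)
    (J : {set 'I_g.+1}) : F :=
  \det (colsub (fun j : 'I_k => nth ord0 (enum J) j) (Atil lambda kappa)).

Definition KJ (kappa : 'I_g.+1 -> F) (J : {set 'I_g.+1}) : F :=
  \prod_(i in J) \prod_(j in J | (i < j)%N) (kappa j - kappa i).

(* c_I in Z^g: the unique solution of B^T c + s = 1_I; componentwise
   (B^T c)_{l+1} = - c_l, so c_l = s_{l+1} - (1_I)_{l+1}. *)
Definition cI (I : {set 'I_g.+1}) (l : 'I_g) : int :=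
  ((lift ord0 l < k)%N)%:Z - (lift ord0 l \in I)%:Z.

Definition acoef (c : 'I_g -> int) (kappa : 'I_g.+1 -> F) : F :=
  (\prod_(i < g) (kappa (lift ord0 i) - kappa ord0) ^ (- (2 * c i ^+ 2)))
  * \prod_(i < g) \prod_(j < g | (i < j)%N)
      (((kappa (lift ord0 i) - kappa (lift ord0 j)) ^+ 2
         / ((kappa (lift ord0 i) - kappa ord0) ^+ 2
            * (kappa (lift ord0 j) - kappa ord0) ^+ 2)) ^ (c i * c j)).

(* Coordinates of the target (Cstar)^{binom n k} x WP^{3g-1}, via the affine
   cone: variables alpha_J (J in ksub) and (U,V,W)_{l} indexed by (j,l),
   j : 'I_3 (U,V,W), of weight j+1. *)
Definition coordT := (ksub + ('I_3 * 'I_g))%type.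

Definition mkpt (alpha : ksub -> F) (kappa : 'I_g.+1 -> F) : coordT -> F :=
  fun x => match x with
           | inl J => alpha J
           | inr (j, l) => (Bmx *m Kmx kappa) l j
           end.

Definition in_target (v : coordT -> F) : Prop :=
  (forall J, v (inl J) != 0) /\ exists x, v (inr x) != 0.

Definition wcone (S : (coordT -> F) -> Prop) : (coordT -> F) -> Prop :=
  fun v => exists w, S w /\ exists t : F, t != 0 /\
     (forall J, v (inl J) = w (inl J)) /\
     (forall j l, v (inr (j, l)) = t ^+ j.+1 * w (inr (j, l))).

(* Zariski closure inside (Cstar)^N x WP^{3g-1}, described by its set of
   representatives in (Cstar)^N x (C^{3g} \ 0). *)
Definition closure_target (S : (coordT -> F) -> Prop) : (coordT -> F) -> Prop :=
  fun v => zclosure (wcone S) v /\ in_target v.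

(* image of psi-tilde (on its domain of definition, restricted to the dense
   open set where the kappa_i are distinct and the lambda_l nonzero) *)
Definition image_psitilde : (coordT -> F) -> Prop :=
  fun v => exists (lambda : 'I_g -> F) (kappa : 'I_g.+1 -> F),
    (forall l, lambda l != 0) /\ injective kappa /\
    minorA lambda kappa Ik * KJ kappa Ik != 0 /\
    let alpha := fun J : ksub =>
      minorA lambda kappa (val J) * KJ kappa (val J)
        / (minorA lambda kappa Ik * KJ kappa Ik) in
    in_target (mkpt alpha kappa) /\ v = mkpt alpha kappa.

Definition image_psi : (coordT -> F) -> Prop :=
  fun v => exists (beta : 'I_g -> F) (kappa : 'I_g.+1 -> F),
    (forall l, beta l != 0) /\ injective kappa /\
    let alpha := fun J : ksub =>
      acoef (cI (val J)) kappa * \prod_(l < g) beta l ^ cI (val J) l in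
    in_target (mkpt alpha kappa) /\ v = mkpt alpha kappa.

Definition Hirota_variety : (coordT -> F) -> Prop := closure_target image_psi.

End Defs.

From mathcomp Require Import all_boot all_order all_algebra.
From mathcomp Require Import reals complex.
From mathcomp Require Import ring.
From Stdlib Require Import FunctionalExtensionality.
Set Implicit Arguments. Unset Strict Implicit. Unset Printing Implicit Defensive.
Import Order.TTheory GRing.Theory.
Local Open Scope ring_scope.

(* For distinct [kappa], the minor [Atil_J] is the Vandermonde determinant [K_J]
   times [prod_l lambda_l ^ [l+1 \in J]], so [alpha_J] is
   [K_J^2 Lambda_J / (K_{I_k}^2 Lambda_{I_k})].  With
   [D_i = (kappa_{i+1} - kappa_1)^2] and [E_ij = (kappa_{i+1} - kappa_{j+1})^2],
   both [a_c(kappa)] and [K_J^2] are Laurent monomials in [D] and [E], with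
   exponents quadratic in [c], resp. in the indicator [b] of [J].  For
   [c = c_J = a - b], where [a] is the indicator of [I_k] and [sum c = [1 \in J] - 1],
   the exponents of [a_{c_J} K_{I_k}^2 / K_J^2] become linear in [c_J]: this ratio is
   [prod_l gamma_l ^ (c_J)_l] for monomials [gamma_l] depending on [kappa] only.
   Hence [beta_l = (gamma_l lambda_l)^-1] is an invertible change of coordinates,
   for fixed [kappa], carrying the image of psi-tilde onto that of psi, and the two
   closures coincide. *)

Section BigProducts.
Variable F : fieldType.

Lemma prodf_exprz (I : Type) (r : seq I) (P : pred I) (x : F) (e : I -> int) :
  x != 0 -> \prod_(i <- r | P i) x ^ e i = x ^ (\sum_(i <- r | P i) e i).
Proof.
by move=> x_neq0; rewrite (big_morph _ (fun a b => expfzDr a b x_neq0) (expr0z x)).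
Qed.

Lemma prodf_expzl (I : Type) (r : seq I) (P : pred I) (f : I -> F) (m : int) :
  \prod_(i <- r | P i) f i ^ m = (\prod_(i <- r | P i) f i) ^ m.
Proof.
by rewrite (big_morph (fun x : F => x ^ m) (fun a b => expfzMl a b m) (exp1rz F m)).
Qed.

Lemma prod_ltn_pairs n (h : 'I_n -> 'I_n -> F) :
  \prod_(i < n) \prod_(j < n | (i < j)%N) (h i j * h j i) =
  \prod_(i < n) \prod_(j < n | j != i) h i j.
Proof.
have neq_split i : \prod_(j < n | j != i) h i j =
    \prod_(j < n | (i < j)%N) h i j * \prod_(j < n | (j < i)%N) h i j.
  rewrite (bigID (fun j : 'I_n => (i < j)%N)) /=.
  by congr (_ * _); apply: eq_bigl => j; rewrite neq_ltn; case: ltngtP.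
rewrite (eq_bigr _ (fun i _ => neq_split i)) big_split /=.
under eq_bigr do rewrite big_split /=.
rewrite big_split /=; congr (_ * _).
by rewrite (exchange_big_dep xpredT).
Qed.

End BigProducts.

Section LaurentMonomial.
Variables (F : fieldType) (n : nat) (D : 'I_n -> F) (E : 'I_n -> 'I_n -> F).
Hypothesis D_neq0 : forall i, D i != 0.
Hypothesis E_neq0 : forall i j : 'I_n, (i < j)%N -> E i j != 0.

Definition monomial (X : 'I_n -> int) (Y : 'I_n -> 'I_n -> int) : F :=
  \prod_(i < n) D i ^ X i * \prod_(i < n) \prod_(j < n | (i < j)%N) E i j ^ Y i j.

Lemma eq_monomial X X' Y Y' : X =1 X' -> (forall i j, Y i j = Y' i j) ->
  monomial X Y = monomial X' Y'.
Proof.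
move=> eqX eqY; rewrite /monomial (eq_bigr _ (fun i _ => congr1 _ (eqX i))).
by congr (_ * _); apply: eq_bigr => i _; apply: eq_bigr => j _; rewrite eqY.
Qed.

Lemma mul_monomial X X' Y Y' :
  monomial X Y * monomial X' Y' =
  monomial (fun i => X i + X' i) (fun i j => Y i j + Y' i j).
Proof.
have DD i : D i ^ (X i + X' i) = D i ^ X i * D i ^ X' i by rewrite expfzDr.
have EE (i : 'I_n) : \prod_(j < n | (i < j)%N) E i j ^ (Y i j + Y' i j) =
    \prod_(j < n | (i < j)%N) E i j ^ Y i j * \prod_(j < n | (i < j)%N) E i j ^ Y' i j.
  by rewrite -big_split; apply: eq_bigr => j ij; rewrite expfzDr ?E_neq0.
rewrite /monomial (eq_bigr _ (fun i _ => DD i)) (eq_bigr _ (fun i _ => EE i)).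
by rewrite !big_split /=; ring.
Qed.

Lemma exprz_monomial X Y m :
  monomial X Y ^ m = monomial (fun i => m * X i) (fun i j => m * Y i j).
Proof.
rewrite /monomial expfzMl -!prodf_expzl.
congr (_ * _); apply: eq_bigr => i _; first by rewrite exprz_exp mulrC.
by rewrite -prodf_expzl; apply: eq_bigr => j _; rewrite exprz_exp mulrC.
Qed.

Lemma prod_monomial m (X : 'I_m -> 'I_n -> int) (Y : 'I_m -> 'I_n -> 'I_n -> int) :
  \prod_(l < m) monomial (X l) (Y l) =
  monomial (fun i => \sum_(l < m) X l i) (fun i j => \sum_(l < m) Y l i j).
Proof.
rewrite /monomial big_split /=; congr (_ * _).
  by rewrite exchange_big; apply: eq_bigr => i _; rewrite prodf_exprz.
rewrite exchange_big; apply: eq_bigr => i _; rewrite exchange_big /=.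
by apply: eq_bigr => j ij; rewrite prodf_exprz ?E_neq0.
Qed.

End LaurentMonomial.

Section BananaGraph.
Variables (F : fieldType) (g k : nat) (kappa : 'I_g.+1 -> F).
Hypothesis kappa_inj : injective kappa.

Local Notation kappa' i := (kappa (lift ord0 i)).

Definition sqd0 (i : 'I_g) : F := (kappa' i - kappa ord0) ^+ 2.
Definition sqd (i j : 'I_g) : F := (kappa' i - kappa' j) ^+ 2.

Lemma sqd0_neq0 i : sqd0 i != 0.
Proof.
rewrite expf_neq0 // subr_eq0; apply/eqP => /kappa_inj/eqP.
by rewrite eq_sym (negbTE (neq_lift _ _)).
Qed.

Lemma sqd_neq0 (i j : 'I_g) : (i < j)%N -> sqd i j != 0.
Proof.
move=> ij; rewrite expf_neq0 // subr_eq0; apply: contraTneq ij.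
by move=> /kappa_inj/lift_inj ->; rewrite ltnn.
Qed.

Local Notation mono := (monomial sqd0 sqd).
Local Notation mul_mono := (mul_monomial sqd0_neq0 sqd_neq0).

Definition chi (J : {set 'I_g.+1}) (i : 'I_g) : int := (lift ord0 i \in J)%:Z.

Lemma cI_chi (J : {set 'I_g.+1}) l : cI k J l = chi (Ik g k) l - chi J l.
Proof. by rewrite /chi /Ik inE. Qed.

Lemma acoef_monomial c :
  acoef c kappa = mono (fun i => - (c i * \sum_j c j)) (fun i j => c i * c j).
Proof.
pose pairs := \prod_(i < g) \prod_(j < g | (i < j)%N)
  (sqd0 i ^ (- (c i * c j)) * sqd0 j ^ (- (c j * c i))).
have -> : acoef c kappa = mono (fun i => - (c i ^+ 2)) (fun i j => c i * c j) * pairs.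
  rewrite /acoef /monomial -mulrA; congr (_ * _).
    by apply: eq_bigr => i _; rewrite -mulrN -exprz_exp.
  rewrite -big_split; apply: eq_bigr => i _; rewrite -big_split.
  apply: eq_bigr => j _; rewrite expfzMl exprz_inv expfzMl [c j * c i]mulrC.
  by rewrite -!exprz_exp.
have -> : pairs = mono (fun i => \sum_(j | j != i) - (c i * c j)) (fun _ _ => 0).
  rewrite /pairs prod_ltn_pairs /monomial [X in _ = _ * X]big1 ?mulr1; last first.
    by move=> i _; rewrite big1.
  by apply: eq_bigr => i _; rewrite prodf_exprz ?sqd0_neq0.
rewrite mul_mono; apply: eq_monomial => [i|i j]; last by rewrite addr0.
by rewrite [X in _ = - (_ * X)](bigD1 i) //= mulrDr mulr_sumr opprD sumrN expr2.
Qed.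

Lemma KJ_lift (J : {set 'I_g.+1}) : KJ kappa J =
  \prod_(i < g) (kappa' i - kappa ord0) ^+ ((ord0 \in J) && (lift ord0 i \in J)) *
  \prod_(i < g) \prod_(j < g | (i < j)%N)
     (kappa' j - kappa' i) ^+ ((lift ord0 i \in J) && (lift ord0 j \in J)).
Proof.
rewrite /KJ big_mkcond big_ord_recl /=; congr (_ * _).
  case: (ord0 \in J); last by rewrite big1.
  rewrite big_mkcond big_ord_recl /= ltnn andbF mul1r.
  by apply: eq_bigr => i _; rewrite /bump leq0n andbT; case: (_ \in J).
apply: eq_bigr => i _; case: (lift ord0 i \in J); last by rewrite big1.
rewrite big_mkcond big_ord_recl /= ltn0 andbF mul1r [RHS]big_mkcond.
by apply: eq_bigr => j _; rewrite /bump !leq0n ltnS; case: (_ \in J); case: ltnP.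
Qed.

Lemma KJ_sqr_monomial (J : {set 'I_g.+1}) : KJ kappa J ^+ 2 =
  mono (fun i => (ord0 \in J)%:Z * chi J i) (fun i j => chi J i * chi J j).
Proof.
rewrite KJ_lift exprMn -!prodrXl /monomial /chi.
congr (_ * _); apply: eq_bigr => i _.
  by rewrite -PoszM mulnb exprAC.
rewrite -prodrXl; apply: eq_bigr => j _.
by rewrite -PoszM mulnb exprAC /sqd -sqrrN opprB.
Qed.

Definition gamma (l : 'I_g) : F :=
  mono (fun i => (i == l)%:Z - chi (Ik g k) i)
       (fun i j => chi (Ik g k) i * (j == l)%:Z + (i == l)%:Z * chi (Ik g k) j).

Lemma gamma_neq0 l : gamma l != 0.
Proof.
rewrite mulf_neq0 //; apply/prodf_neq0 => i _; rewrite ?expfz_neq0 ?sqd0_neq0 //.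
by apply/prodf_neq0 => j ij; rewrite expfz_neq0 ?sqd_neq0.
Qed.

Lemma sum_mul_delta (c : 'I_g -> int) i : \sum_l c l * (i == l)%:Z = c i.
Proof.
rewrite (bigD1 i) //= eqxx mulr1 big1 ?addr0 // => l.
by rewrite eq_sym => /negbTE ->; rewrite mulr0.
Qed.

Lemma prod_gamma_exprz (c : 'I_g -> int) :
  \prod_l gamma l ^ c l =
  mono (fun i => c i - chi (Ik g k) i * \sum_l c l)
       (fun i j => chi (Ik g k) i * c j + c i * chi (Ik g k) j).
Proof.
under eq_bigr do rewrite exprz_monomial.
rewrite (prod_monomial sqd0_neq0 sqd_neq0); apply: eq_monomial => [i|i j].
  rewrite mulr_sumr -(sum_mul_delta c i) -sumrB.
  by apply: eq_bigr => l _; ring.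
rewrite -(sum_mul_delta c j) -(sum_mul_delta c i) mulr_sumr mulr_suml -big_split /=.
by apply: eq_bigr => l _; ring.
Qed.

Lemma sum_chi (J : {set 'I_g.+1}) : \sum_(i < g) chi J i = #|J|%:Z - (ord0 \in J)%:Z.
Proof.
have -> : #|J| = (\sum_(i < g.+1) (i \in J))%N.
  by rewrite -sum1_card big_mkcond; apply: eq_bigr => i _; case: (i \in J).
by rewrite big_ord_recl PoszD (big_morph Posz PoszD (erefl 0%:Z)) addrC addKr.
Qed.

Lemma card_Ik : (k <= g.+1)%N -> #|Ik g k| = k.
Proof.
move=> kn; have -> : Ik g k = widen_ord kn @: [set: 'I_k].
  apply/setP => i; rewrite inE; apply/idP/imsetP => [ik | [j _ ->]].
    by exists (Ordinal ik) => //; apply: val_inj.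
  exact: (ltn_ord j).
have inj : injective (widen_ord kn) by move=> i1 i2 /(congr1 val) /= /val_inj.
by rewrite (card_imset _ inj) cardsT card_ord.
Qed.

Lemma sum_cI (J : {set 'I_g.+1}) : #|J| = k -> (0 < k)%N -> (k <= g)%N ->
  \sum_l cI k J l = (ord0 \in J)%:Z - 1.
Proof.
move=> cardJ k_gt0 kg.
rewrite (eq_bigr _ (fun l _ => cI_chi J l)) sumrB !sum_chi card_Ik ?(leqW kg) //.
by rewrite cardJ inE k_gt0 /=; ring.
Qed.

Lemma acoef_cI (J : {set 'I_g.+1}) : #|J| = k -> (0 < k)%N -> (k <= g)%N ->
  acoef (cI k J) kappa * KJ kappa (Ik g k) ^+ 2 =
  KJ kappa J ^+ 2 * \prod_l gamma l ^ cI k J l.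
Proof.
move=> cardJ k_gt0 kg.
rewrite acoef_monomial !KJ_sqr_monomial prod_gamma_exprz !mul_mono sum_cI //.
have Ik0 : ord0 \in Ik g k by rewrite inE.
by apply: eq_monomial => [i|i j]; rewrite !cI_chi ?Ik0 /=; ring.
Qed.

Section Columns.
Variables (J : {set 'I_g.+1}) (cardJ : #|J| = k).
Let col (j : 'I_k) : 'I_g.+1 := nth ord0 (enum J) j.

Lemma big_col (G : 'I_g.+1 -> F) : \prod_(j in J) G j = \prod_(j < k) G (col j).
Proof. by rewrite -big_enum (big_nth ord0) -cardE cardJ big_mkord. Qed.

Lemma big_col_cond (P : pred 'I_g.+1) (G : 'I_g.+1 -> F) :
  \prod_(j in J | P j) G j = \prod_(j < k | P (col j)) G (col j).
Proof. by rewrite -big_enum_cond (big_nth ord0) -cardE cardJ big_mkord. Qed.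

Lemma col_ltn (i j : 'I_k) : (col i < col j)%N = (i < j)%N.
Proof.
have srt : sorted <%O (enum J).
  rewrite (sorted_filter lt_trans) // -sorted_map unlock val_ord_enum ltEnat.
  exact: iota_ltn_sorted.
have ltn_size (m : 'I_k) : (m : nat) \in [pred m | (m < size (enum J))%N].
  by rewrite inE -cardE cardJ.
by have := lt_sorted_ltn_nth ord0 srt (ltn_size i) (ltn_size j); rewrite ltEord.
Qed.

Lemma KJ_col : KJ kappa J =
  \prod_(i < k) \prod_(j < k | (i < j)%N) (kappa (col j) - kappa (col i)).
Proof.
rewrite /KJ big_col; apply: eq_bigr => i _.
by rewrite big_col_cond; apply: eq_bigl => j; rewrite col_ltn.
Qed.

Lemma minorA_factor (lambda : 'I_g -> F) :
  minorA k lambda kappa J = KJ kappa J * \prod_(l < g) lambda l ^ chi J l.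
Proof.
rewrite /minorA /Atil /Dmx -/col mul_mx_diag.
set d := \row_(j < g.+1) _.
have -> : colsub col (\matrix_(i, j) (Vmx k kappa i j * d 0 j)) =
    Vandermonde k (\row_j kappa (col j)) *m diag_mx (\row_j d 0 (col j)).
  by rewrite mul_mx_diag; apply/matrixP => i j; rewrite !mxE.
rewrite det_mulmx det_Vandermonde det_diag KJ_col; congr (_ * _).
  by apply: eq_bigr => i _; apply: eq_bigr => j _; rewrite !mxE.
rewrite (eq_bigr (fun j : 'I_k => d 0 (col j))); last by move=> j _; rewrite mxE.
rewrite -big_col big_mkcond big_ord_recl /= {1}/d mxE unlift_none if_same mul1r.
by apply: eq_bigr => l _; rewrite /d mxE liftK /chi; case: ifP.
Qed.

End Columns.

Lemma KJ_neq0 (J : {set 'I_g.+1}) : KJ kappa J != 0.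
Proof.
apply/prodf_neq0 => i _; apply/prodf_neq0 => j /andP [_ ij].
by rewrite subr_eq0; apply: contraTneq ij => /kappa_inj ->; rewrite ltnn.
Qed.

Lemma minor_ratio_reparam (lambda : 'I_g -> F) (J : {set 'I_g.+1}) :
  (forall l, lambda l != 0) -> #|J| = k -> (0 < k)%N -> (k <= g)%N ->
  minorA k lambda kappa J * KJ kappa J /
    (minorA k lambda kappa (Ik g k) * KJ kappa (Ik g k)) =
  acoef (cI k J) kappa * \prod_l ((gamma l * lambda l)^-1) ^ cI k J l.
Proof.
move=> lambda_neq0 cardJ k_gt0 kg.
pose lam (e : 'I_g -> int) := \prod_l lambda l ^ e l.
have lam_neq0 e : lam e != 0 by apply/prodf_neq0 => l _; rewrite expfz_neq0.
have gam_neq0 : \prod_l gamma l ^ cI k J l != 0.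
  by apply/prodf_neq0 => l _; rewrite expfz_neq0 ?gamma_neq0.
have KIk_neq0 := KJ_neq0 (Ik g k).
have -> : \prod_l ((gamma l * lambda l)^-1) ^ cI k J l =
    (\prod_l gamma l ^ cI k J l)^-1 * (lam (chi J) / lam (chi (Ik g k))).
  rewrite -prodfV -prodf_div -big_split; apply: eq_bigr => l _ /=.
  rewrite exprz_inv expfzMl -(invr_expz (gamma l)) cI_chi opprB.
  by rewrite (expfzDr _ _ (lambda_neq0 l)) -invr_expz.
have -> : acoef (cI k J) kappa =
    KJ kappa J ^+ 2 * \prod_l gamma l ^ cI k J l / KJ kappa (Ik g k) ^+ 2.
  by rewrite -acoef_cI // mulfK // expf_neq0.
rewrite !minorA_factor ?card_Ik ?(leqW kg) // -/(lam _) -/(lam _).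
by field; rewrite KIk_neq0 !lam_neq0 gam_neq0.
Qed.

End BananaGraph.

Section Images.
Variables (F : fieldType) (g k : nat).
Hypotheses (k_gt0 : (0 < k)%N) (k_le_g : (k <= g)%N).

Lemma alpha_reparam (lambda beta : 'I_g -> F) (kappa : 'I_g.+1 -> F) :
  (forall l, lambda l != 0) -> injective kappa ->
  (forall l, beta l = (gamma k kappa l * lambda l)^-1) ->
  (fun J : ksub g k => minorA k lambda kappa (val J) * KJ kappa (val J) /
                       (minorA k lambda kappa (Ik g k) * KJ kappa (Ik g k))) =
  (fun J : ksub g k => acoef (cI k (val J)) kappa *
                       \prod_(l < g) beta l ^ cI k (val J) l).
Proof.
move=> lambda_neq0 kappa_inj betaE; apply: functional_extensionality => J.
rewrite minor_ratio_reparam ?(eqP (valP J)) //; congr (_ * _).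
by apply: eq_bigr => l _; rewrite betaE.
Qed.

Lemma image_psitilde_psi v : @image_psitilde F g k v <-> @image_psi F g k v.
Proof.
split.
- case=> lambda [kappa [lambda_neq0 [kappa_inj [_]]]].
  pose beta l := (gamma k kappa l * lambda l)^-1.
  rewrite /= (@alpha_reparam _ beta) // => target_v.
  exists beta, kappa; split=> // l.
  by rewrite invr_eq0 mulf_neq0 ?gamma_neq0.
- case=> beta [kappa [beta_neq0 [kappa_inj target_v]]].
  pose lambda l := (gamma k kappa l * beta l)^-1.
  have lambda_neq0 l : lambda l != 0 by rewrite invr_eq0 mulf_neq0 ?gamma_neq0.
  exists lambda, kappa; do 2!split => //; split.
    rewrite minorA_factor ?card_Ik ?(leqW k_le_g) // !mulf_neq0 ?KJ_neq0 //.
    by apply/prodf_neq0 => l _; rewrite expfz_neq0.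
  rewrite /= (@alpha_reparam _ beta) // => l.
  by rewrite /lambda invfM invrK mulKf ?gamma_neq0.
Qed.

End Images.

Lemma closure_target_ext (F : fieldType) (g k : nat)
    (S S' : (coordT g k -> F) -> Prop) :
  (forall w, S w <-> S' w) -> forall v, closure_target S v <-> closure_target S' v.
Proof.
move=> eqS v; split=> -[closure_v target_v]; split=> // p vanish;
  apply: closure_v => w [w0 [S_w0 cone_w]]; apply: vanish; exists w0; split=> //;
  exact/eqS.
Qed.

Local Open Scope complex_scope.

Theorem theorem5p10 (R : realType) (g k : nat) (hg : (1 <= g)%N)
    (hk1 : (1 <= k)%N) (hkg : (k <= g)%N) :
  forall v : coordT g k -> R[i],
    @closure_target (R[i]) g k (@image_psitilde (R[i]) g k) v <->
    @Hirota_variety (R[i]) g k v.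
Proof. exact: closure_target_ext (image_psitilde_psi hk1 hkg). Qed.
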